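(* Let $k\ge1$ be an integer and $\alpha>k$ real. Then $$\sum_{n=1}^\infty\frac{H_{n+\alpha}}{n\binom{n+k}{k}}=\sum_{j=1}^k(-1)^{j+1}\binom kj\Bigg\{H_\alpha^2+H_\alpha^{(2)}-H_{\alpha-j}^2-H_{\alpha-j}^{(2)}-(j-\alpha)\sum_{i=1}^j\frac{H_{\alpha+i-j}}{i(\alpha+i-j)}\Bigg\},$$ $$\sum_{n=1}^\infty\frac{H^{(2)}_{n+\alpha}}{n\binom{n+k}{k}}=\sum_{j=1}^k(-1)^{j+1}\binom kj\Bigg\{2H_\alpha^{(3)}+H_{\alpha-j}\zeta(2)+2H_\alpha H_\alpha^{(2)}-2H_{\alpha-j}^{(3)}-H_\alpha\zeta(2)-2H_{\alpha-j}H_{\alpha-j}^{(2)}-(j-\alpha)\sum_{i=1}^j\frac{H^{(2)}_{\alpha+i-j}}{i(\alpha+i-j)}-\sum_{i=1}^j\frac{H_{\alpha+i-j}}{(\alpha+i-j)^2}\Bigg\},$$ $$\sum_{n=1}^\infty\frac{H^2_{n+\alpha}}{n\binom{n+k}{k}}=\sum_{j=1}^k(-1)^{j+1}\binom kj\Bigg\{H_\alpha^3+H_\alpha H_\alpha^{(2)}+H_\alpha\zeta(2)-H_{\alpha-j}^3-H_{\alpha-j}H_{\alpha-j}^{(2)}-H_{\alpha-j}\zeta(2)+\sum_{i=1}^j\frac{H_{\alpha+i-j}}{(\alpha+i-j)^2}-(j-\alpha)\sum_{i=1}^j\frac{H^2_{\alpha+i-j}}{i(\alpha+i-j)}\Bi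gg\}.$$
   Context: Shifted harmonic numbers: for a real $\alpha$ that is not a negative integer, $H_\alpha := \sum_{k=1}^\infty\left(\frac1k-\frac1{k+\alpha}\right)$ and, for integers $m\ge 2$, $H_\alpha^{(m)} := \sum_{k=1}^\infty\left(\frac1{k^m}-\frac1{(k+\alpha)^m}\right)=\zeta(m)-\zeta(m,\alpha+1)$, where $\zeta$ is the Riemann zeta function and $\zeta(s,\alpha+1)=\sum_{n=1}^\infty (n+\alpha)^{-s}$ is the Hurwitz zeta function. Powers such as $H_\alpha^2$ mean $(H_\alpha)^2$. *)

From Stdlib Require Import Reals Lra Lia ClassicalEpsilon.
Open Scope R_scope.

(* The limit of a real sequence (chosen classically; meaningful when it converges). *)
Definition lim_seq (u : nat -> R) : R :=
  epsilon (inhabits 0) (fun l => Un_cv u l).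

Fixpoint sum1 (k : nat) (f : nat -> R) : R :=
  match k with
  | O => 0
  | S k' => sum1 k' f + f (S k')
  end.

Definition Hm (m : nat) (a : R) : R :=
  lim_seq (fun N => sum1 N (fun k => / (INR k) ^ m - / (INR k + a) ^ m)).

Definition H (a : R) : R := Hm 1 a.

Definition zeta (m : nat) : R := lim_seq (fun N => sum1 N (fun k => / (INR k) ^ m)).

(** Partial fractions give [1/(n C(n+k,k)) = sum_j (-1)^(j+1) C(k,j) (1/n - 1/(n+j))],
    so each series is a signed combination of [S_f(a,j) = sum_n f(n+a) (1/n - 1/(n+j))].
    Telescoping in [n] gives
    [S_f(a,j+1) = S_f(a-1,j) + sum_n (f(n+a) - f(n+a-1))/n + f(a)/(j+1)],
    so by induction on [j] everything reduces to a few series in [a]; the only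
    non-elementary one is [sum_n H_(n+a)/(n(n+a)) = (H_a^2 + H_a^(2))/a].
    For it, with [Psi(x) = sum_n H_(n+x) (1/n - 1/(n+x))], the defect
    [Psi(x) - H_x^2 - H_x^(2)] is 1-periodic and vanishes at 0, while dominated
    convergence shows that its values at [c+n] and [n] differ by [o(1)]; so it vanishes. *)

From Stdlib Require Import Reals Lra Lia ClassicalEpsilon Factorial.
From Coquelicot Require Import Rcomplements Rbar Hierarchy Lim_seq ElemFct.
Open Scope R_scope.

(** * Finite sums and series *)

Lemma sum1_S N f : sum1 (S N) f = sum1 N f + f (S N).
Proof. reflexivity. Qed.

Lemma sum1_ext N f g :
  (forall i, (1 <= i <= N)%nat -> f i = g i) -> sum1 N f = sum1 N g.
Proof.
  induction N as [|N IH]; intros Hfg; simpl; [reflexivity|].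
  rewrite IH, Hfg; [reflexivity|lia|intros; apply Hfg; lia].
Qed.

Lemma sum1_0 N : sum1 N (fun _ => 0) = 0.
Proof. induction N as [|N IH]; simpl; [|rewrite IH]; ring. Qed.

Lemma sum1_plus N f g : sum1 N (fun i => f i + g i) = sum1 N f + sum1 N g.
Proof. induction N as [|N IH]; simpl; [|rewrite IH]; ring. Qed.

Lemma sum1_minus N f g : sum1 N (fun i => f i - g i) = sum1 N f - sum1 N g.
Proof. induction N as [|N IH]; simpl; [|rewrite IH]; ring. Qed.

Lemma sum1_scal N c f : sum1 N (fun i => c * f i) = c * sum1 N f.
Proof. induction N as [|N IH]; simpl; [|rewrite IH]; ring. Qed.

Lemma sum1_Sl N f : sum1 (S N) f = f 1%nat + sum1 N (fun i => f (S i)).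
Proof. induction N as [|N IH]; simpl in *; [|rewrite IH]; ring. Qed.

Lemma sum1_telescope N g : sum1 N (fun n => g (pred n) - g n) = g 0%nat - g N.
Proof. induction N as [|N IH]; simpl in *; [|rewrite IH]; ring. Qed.

Lemma sum1_comm K N (f : nat -> nat -> R) :
  sum1 N (fun n => sum1 K (fun j => f j n)) = sum1 K (fun j => sum1 N (fun n => f j n)).
Proof.
  induction N as [|N IH]; simpl; [now rewrite sum1_0|].
  now rewrite IH, <- sum1_plus.
Qed.

Lemma sum1_le N f g :
  (forall i, (1 <= i <= N)%nat -> f i <= g i) -> sum1 N f <= sum1 N g.
Proof.
  induction N as [|N IH]; intros Hfg; simpl; [lra|].
  apply Rplus_le_compat; [apply IH; intros; apply Hfg; lia | apply Hfg; lia].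
Qed.

Lemma sum1_nonneg N f : (forall i, (1 <= i <= N)%nat -> 0 <= f i) -> 0 <= sum1 N f.
Proof. intros Hf. rewrite <- (sum1_0 N). now apply sum1_le. Qed.

Lemma sum1_le_incr N M f :
  (forall i, (1 <= i)%nat -> 0 <= f i) -> (N <= M)%nat -> sum1 N f <= sum1 M f.
Proof.
  intros Hf HNM. induction HNM as [|M _ IH]; [lra|].
  simpl. specialize (Hf (S M) ltac:(lia)). lra.
Qed.

Lemma Rabs_sum1_minus_le f d P M :
  (forall i, (1 <= i)%nat -> Rabs (f i) <= d i) -> (P <= M)%nat ->
  Rabs (sum1 M f - sum1 P f) <= sum1 M d - sum1 P d.
Proof.
  intros Hd HPM. induction HPM as [|M _ IH].
  - rewrite !Rminus_diag, Rabs_R0. lra.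
  - rewrite !sum1_S.
    replace (sum1 M f + f (S M) - sum1 P f) with ((sum1 M f - sum1 P f) + f (S M)) by ring.
    eapply Rle_trans; [apply Rabs_triang|]. specialize (Hd (S M) ltac:(lia)). lra.
Qed.

Lemma sum_f_R0_sum1 t N : sum_f_R0 (fun n => t (S n)) N = sum1 (S N) t.
Proof. induction N as [|N IH]; simpl; [ring|now rewrite IH]. Qed.

Lemma is_lim_seq_sum1 K (u : nat -> nat -> R) (l : nat -> R) :
  (forall j, (1 <= j <= K)%nat -> is_lim_seq (u j) (l j)) ->
  is_lim_seq (fun n => sum1 K (fun j => u j n)) (sum1 K l).
Proof.
  induction K as [|K IH]; intros Hu; simpl; [apply is_lim_seq_const|].
  apply is_lim_seq_plus'; [apply IH; intros; apply Hu; lia | apply Hu; lia].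
Qed.

Definition is_series1 (f : nat -> R) (l : R) := is_lim_seq (fun N => sum1 N f) l.

Lemma is_series1_ext f g l :
  (forall n, (1 <= n)%nat -> f n = g n) -> is_series1 f l -> is_series1 g l.
Proof.
  intros Hfg Hf. eapply is_lim_seq_ext; [|exact Hf].
  intro N. apply sum1_ext. intros; apply Hfg; lia.
Qed.

Lemma is_series1_plus f g l m :
  is_series1 f l -> is_series1 g m -> is_series1 (fun n => f n + g n) (l + m).
Proof.
  intros Hf Hg. eapply is_lim_seq_ext; [|apply (is_lim_seq_plus' _ _ _ _ Hf Hg)].
  intro N; simpl; now rewrite sum1_plus.
Qed.

Lemma is_series1_minus f g l m :
  is_series1 f l -> is_series1 g m -> is_series1 (fun n => f n - g n) (l - m).
Proof.
  intros Hf Hg. eapply is_lim_seq_ext; [|apply (is_lim_seq_minus' _ _ _ _ Hf Hg)].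
  intro N; simpl; now rewrite sum1_minus.
Qed.

Lemma is_series1_scal c f l : is_series1 f l -> is_series1 (fun n => c * f n) (c * l).
Proof.
  intros Hf. eapply is_lim_seq_ext; [|apply (is_lim_seq_scal_l _ c _ Hf)].
  intro N; simpl; now rewrite sum1_scal.
Qed.

Lemma is_series1_0 : is_series1 (fun _ => 0) 0.
Proof.
  eapply is_lim_seq_ext; [|apply is_lim_seq_const]. intro N; simpl; now rewrite sum1_0.
Qed.

Lemma is_series1_unique f l m : is_series1 f l -> is_series1 f m -> l = m.
Proof.
  intros Hl Hm. apply is_lim_seq_unique in Hl. apply is_lim_seq_unique in Hm.
  rewrite Hl in Hm. now injection Hm.
Qed.

Lemma is_series1_telescope g (l : R) :
  is_lim_seq g l -> is_series1 (fun n => g (pred n) - g n) (g 0%nat - l).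
Proof.
  intros Hg. eapply is_lim_seq_ext; [intro N; symmetry; apply sum1_telescope|].
  apply is_lim_seq_minus'; [apply is_lim_seq_const|exact Hg].
Qed.

Lemma ex_series1_bounded f B :
  (forall n, (1 <= n)%nat -> 0 <= f n) -> (forall N, sum1 N f <= B) ->
  exists l, is_series1 f l.
Proof.
  intros Hf HB.
  destruct (ex_finite_lim_seq_incr (fun N => sum1 N f) B) as [l Hl]; [|exact HB|].
  - intro n; simpl. specialize (Hf (S n) ltac:(lia)). lra.
  - now exists l.
Qed.

Lemma sum1_le_is_series1 f l N :
  (forall n, (1 <= n)%nat -> 0 <= f n) -> is_series1 f l -> sum1 N f <= l.
Proof.
  intros Hf Hl.
  assert (Hle : Rbar_le (sum1 N f) l).
  { apply (is_lim_seq_le (fun _ => sum1 N f) (fun M => sum1 (N + M) f)).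
    - intro M. apply sum1_le_incr; [exact Hf|lia].
    - apply is_lim_seq_const.
    - apply (is_lim_seq_incr_n _ N) in Hl. eapply is_lim_seq_ext; [|exact Hl].
      intro M; simpl; now rewrite Nat.add_comm. }
  exact Hle.
Qed.

Lemma lim_seq_is_lim u (l : R) : is_lim_seq u l -> lim_seq u = l.
Proof.
  intros Hl. apply is_lim_seq_Reals in Hl. unfold lim_seq.
  apply (UL_sequence u); [|exact Hl].
  apply (epsilon_spec (inhabits 0) (fun l => Un_cv u l)). now exists l.
Qed.

Lemma is_lim_seq_inv_INR_plus b : 0 < b -> is_lim_seq (fun n => / (INR n + b)) 0.
Proof.
  intros Hb.
  assert (Hinf : is_lim_seq (fun n => INR n + b) p_infty).
  { eapply is_lim_seq_plus; [apply is_lim_seq_INR|apply is_lim_seq_const|reflexivity]. }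
  exact (is_lim_seq_inv _ _ Hinf ltac:(discriminate)).
Qed.

Lemma is_lim_seq_le_inv_INR_plus u K b :
  0 < b -> (forall n, Rabs (u n) <= K * / (INR n + b)) -> is_lim_seq u 0.
Proof.
  intros Hb Hu.
  assert (Hlim : forall c, is_lim_seq (fun n => c * / (INR n + b)) 0).
  { intro c. rewrite <- (Rmult_0_r c).
    exact (is_lim_seq_scal_l _ c _ (is_lim_seq_inv_INR_plus b Hb)). }
  apply (is_lim_seq_le_le (fun n => - K * / (INR n + b)) u (fun n => K * / (INR n + b)));
    [|apply Hlim|apply Hlim].
  intro n. specialize (Hu n). apply Rabs_le_between in Hu. lra.
Qed.

Lemma is_lim_seq_series1_dominated (g : nat -> nat -> R) (d L : nat -> R) B :
  (forall n p, (1 <= p)%nat -> Rabs (g n p) <= d p) -> (forall N, sum1 N d <= B) ->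
  (forall p, (1 <= p)%nat -> is_lim_seq (fun n => g n p) 0) ->
  (forall n, is_series1 (g n) (L n)) ->
  is_lim_seq L 0.
Proof.
  intros Hd HB Hlim HL.
  assert (d_ge0 : forall p, (1 <= p)%nat -> 0 <= d p).
  { intros p Hp. eapply Rle_trans; [apply Rabs_pos|apply (Hd 0%nat p Hp)]. }
  destruct (ex_series1_bounded d B d_ge0 HB) as [D HD].
  assert (sum1_le_D : forall M, sum1 M d <= D).
  { intro M. exact (sum1_le_is_series1 d D M d_ge0 HD). }
  apply is_lim_seq_spec. intro eps.
  assert (Heps : 0 < eps / 2) by (destruct eps; simpl; lra).
  (* Cut at [P] where the tail of [sum d] is below [eps/2]; the head tends to 0. *)
  destruct (proj2 (is_lim_seq_spec _ _) HD (mkposreal _ Heps)) as [P HP]; simpl in HP.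
  specialize (HP P (le_n P)). rewrite Rabs_minus_sym, Rabs_pos_eq in HP by (specialize (sum1_le_D P); lra).
  assert (Hhead := is_lim_seq_sum1 P (fun p n => g n p) (fun _ => 0) (fun p Hp => Hlim p (proj1 Hp))).
  rewrite sum1_0 in Hhead.
  destruct (proj2 (is_lim_seq_spec _ _) Hhead (mkposreal _ Heps)) as [N0 HN0]; simpl in HN0.
  exists N0. intros n Hn. specialize (HN0 n Hn). rewrite Rminus_0_r in *.
  change (fun j => g n j) with (g n) in HN0.
  assert (Htail : Rabs (L n - sum1 P (g n)) <= D - sum1 P d).
  { assert (Hle : Rbar_le (Rabs (L n - sum1 P (g n))) (D - sum1 P d)).
    { apply (is_lim_seq_le (fun M => Rabs (sum1 (M + P) (g n) - sum1 P (g n)))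
               (fun _ => D - sum1 P d)).
      - intro M. eapply Rle_trans; [apply Rabs_sum1_minus_le; [exact (Hd n)|lia]|].
        specialize (sum1_le_D (M + P)%nat). lra.
      - apply (is_lim_seq_abs (fun M => sum1 (M + P) (g n) - sum1 P (g n))
                 (L n - sum1 P (g n))).
        apply is_lim_seq_minus'; [|apply is_lim_seq_const].
        exact (proj1 (is_lim_seq_incr_n (fun M => sum1 M (g n)) P _) (HL n)).
      - apply is_lim_seq_const. }
    exact Hle. }
  replace (L n) with ((L n - sum1 P (g n)) + sum1 P (g n)) by ring.
  eapply Rle_lt_trans; [apply Rabs_triang|]. lra.
Qed.

(** * Shifted harmonic numbers *)

Lemma INR_ge_1 n : (1 <= n)%nat -> 1 <= INR n.
Proof. intros Hn. apply (le_INR 1), Hn. Qed.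

Lemma sum1_inv_sqr_le N : (1 <= N)%nat -> sum1 N (fun k => / INR k ^ 2) <= 2 - / INR N.
Proof.
  induction N as [|N IH]; intros HN; [lia|].
  destruct (Nat.eq_dec N 0) as [->|HN0]; [simpl; lra|].
  specialize (IH ltac:(lia)). rewrite sum1_S, S_INR.
  assert (Hpos := INR_ge_1 N ltac:(lia)).
  assert (Hstep : / (INR N + 1) ^ 2 <= / INR N - / (INR N + 1)).
  { replace (/ INR N - / (INR N + 1)) with (/ (INR N * (INR N + 1))) by (field; lra).
    apply Rinv_le_contravar; [apply Rmult_lt_0_compat; lra | simpl; nra]. }
  lra.
Qed.

Lemma sum1_inv_sqr_le_2 N : sum1 N (fun k => / INR k ^ 2) <= 2.
Proof.
  destruct N as [|N]; [simpl; lra|].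
  assert (Hinv : 0 < / INR (S N)) by (apply Rinv_0_lt_compat, lt_0_INR; lia).
  pose proof (sum1_inv_sqr_le (S N) ltac:(lia)) as Hle. lra.
Qed.

Definition harm_term m a (k : nat) := / INR k ^ m - / (INR k + a) ^ m.

Lemma harm_term_bounds m a k : 0 <= a -> (1 <= m)%nat -> (1 <= k)%nat ->
  0 <= harm_term m a k <= (a + 1) * / INR k ^ 2.
Proof.
  intros Ha Hm1 Hk. unfold harm_term. pose proof (INR_ge_1 k Hk) as Hk1.
  assert (Hpow : 0 < INR k ^ m <= (INR k + a) ^ m) by (split; [apply pow_lt|apply pow_incr]; lra).
  assert (Hinv : / (INR k + a) ^ m <= / INR k ^ m) by (apply Rinv_le_contravar; lra).
  assert (Hsq : 0 < INR k ^ 2) by (apply pow_lt; lra).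
  split; [lra|].
  destruct m as [|[|m]]; [lia| |].
  - replace (/ INR k ^ 1 - / (INR k + a) ^ 1) with (a * / (INR k * (INR k + a))) by (field; lra).
    assert (Hle : a * / (INR k * (INR k + a)) <= a * / INR k ^ 2).
    { apply Rmult_le_compat_l; [lra|]. apply Rinv_le_contravar; simpl; nra. }
    assert (Hinv2 : 0 < / INR k ^ 2) by (apply Rinv_0_lt_compat; lra).
    nra.
  - assert (Hle : / INR k ^ S (S m) <= / INR k ^ 2).
    { apply Rinv_le_contravar; [lra|]. apply Rle_pow; [lra|lia]. }
    assert (Hinvm : 0 < / (INR k + a) ^ S (S m)) by (apply Rinv_0_lt_compat, pow_lt; lra).
    assert (Ha2 : 0 <= a * / INR k ^ 2) by (apply Rmult_le_pos; [lra|left; apply Rinv_0_lt_compat; lra]).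
    nra.
Qed.

Lemma Hm_is_series1 m a : 0 <= a -> (1 <= m)%nat -> is_series1 (harm_term m a) (Hm m a).
Proof.
  intros Ha Hm1.
  destruct (ex_series1_bounded (harm_term m a) ((a + 1) * 2)) as [l Hl].
  - intros n Hn. now apply harm_term_bounds.
  - intro N. eapply Rle_trans; [apply (sum1_le _ _ (fun k => (a + 1) * / INR k ^ 2))|].
    + intros i Hi. apply harm_term_bounds; auto; lia.
    + rewrite sum1_scal. apply Rmult_le_compat_l; [lra|apply sum1_inv_sqr_le_2].
  - unfold Hm. now rewrite (lim_seq_is_lim _ l).
Qed.

Lemma zeta2_is_series1 : is_series1 (fun k => / INR k ^ 2) (zeta 2).
Proof.
  destruct (ex_series1_bounded (fun k => / INR k ^ 2) 2) as [l Hl].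
  - intros n Hn. left. apply Rinv_0_lt_compat, pow_lt. pose proof (INR_ge_1 n Hn) as Hn1. lra.
  - apply sum1_inv_sqr_le_2.
  - unfold zeta. now rewrite (lim_seq_is_lim _ l).
Qed.

Lemma Hm_nonneg m a : 0 <= a -> (1 <= m)%nat -> 0 <= Hm m a.
Proof.
  intros Ha Hm1.
  assert (Hle : Rbar_le 0 (Hm m a)).
  { apply (is_lim_seq_le (fun _ => 0) (fun N => sum1 N (harm_term m a)));
      [|apply is_lim_seq_const|now apply Hm_is_series1].
    intro N. apply sum1_nonneg. intros; apply harm_term_bounds; auto; lia. }
  exact Hle.
Qed.

Lemma H_nonneg x : 0 <= x -> 0 <= H x.
Proof. intros Hx. now apply Hm_nonneg. Qed.

Lemma Hm2_le_2 a : 0 <= a -> Hm 2 a <= 2.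
Proof.
  intros Ha.
  assert (Hle : Rbar_le (Hm 2 a) 2).
  { apply (is_lim_seq_le (fun N => sum1 N (harm_term 2 a)) (fun _ => 2));
      [|apply Hm_is_series1; [lra|lia]|apply is_lim_seq_const].
    intro N. eapply Rle_trans; [|apply (sum1_inv_sqr_le_2 N)]. apply sum1_le. intros i Hi.
    unfold harm_term. pose proof (INR_ge_1 i ltac:(lia)) as Hi1.
    assert (Hinv : 0 < / (INR i + a) ^ 2) by (apply Rinv_0_lt_compat, pow_lt; lra). lra. }
  exact Hle.
Qed.

Lemma Hm_0 m : Hm m 0 = 0.
Proof.
  unfold Hm. apply lim_seq_is_lim. eapply is_lim_seq_ext; [|apply is_lim_seq_const].
  intro N. transitivity (sum1 N (fun _ => 0)); [symmetry; apply sum1_0|apply sum1_ext].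
  intros. rewrite Rplus_0_r. ring.
Qed.

Lemma H_0 : H 0 = 0.
Proof. apply Hm_0. Qed.

Lemma Hm_succ m x : 0 <= x -> (1 <= m)%nat -> Hm m (x + 1) = Hm m x + / (x + 1) ^ m.
Proof.
  intros Hx Hm1.
  set (g := fun n : nat => / (INR n + x + 1) ^ m).
  (* the shift by 1 changes the partial sums by the telescoping [g 0 - g N] *)
  assert (Hg : is_lim_seq g 0).
  { apply (is_lim_seq_le_inv_INR_plus _ 1 (x + 1)); [lra|]. intro n. unfold g.
    assert (H1 : 1 <= INR n + x + 1) by (pose proof (pos_INR n); lra).
    assert (Hpow : INR n + x + 1 <= (INR n + x + 1) ^ m).
    { destruct m as [|m]; [lia|]. rewrite <- (pow_1 (INR n + x + 1)) at 1. apply Rle_pow; [lra|lia]. }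
    rewrite Rabs_pos_eq by (left; apply Rinv_0_lt_compat, pow_lt; lra).
    rewrite Rmult_1_l, <- Rplus_assoc. apply Rinv_le_contravar; lra. }
  apply (is_series1_unique (harm_term m (x + 1))); [apply Hm_is_series1; auto; lra|].
  replace (Hm m x + / (x + 1) ^ m) with (Hm m x + (g 0%nat - 0))
    by (unfold g; simpl INR; rewrite Rplus_0_l; ring).
  eapply is_series1_ext; [|exact (is_series1_plus _ _ _ _ (Hm_is_series1 m x Hx Hm1)
                                    (is_series1_telescope g 0 Hg))].
  intros [|n] Hn; [lia|]. unfold harm_term, g. simpl pred. rewrite S_INR.
  replace (INR n + x + 1) with (INR n + 1 + x) by ring.
  replace (INR n + 1 + (x + 1)) with (INR n + 1 + x + 1) by ring. ring.
Qed.

Lemma H_succ x : 0 <= x -> H (x + 1) = H x + / (x + 1).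
Proof. intros Hx. unfold H. rewrite Hm_succ by (lra || lia). now rewrite pow_1. Qed.

Lemma H_plus_INR x p : 0 <= x -> H (x + INR p) = H x + sum1 p (fun i => / (x + INR i)).
Proof.
  intros Hx. induction p as [|p IH]; [simpl; rewrite Rplus_0_r; ring|].
  rewrite sum1_S, S_INR, <- Rplus_assoc, H_succ, IH by (pose proof (pos_INR p) as Hp; lra). ring.
Qed.

Lemma Hm_pred m a : 1 <= a -> (1 <= m)%nat -> Hm m (a - 1) = Hm m a - / a ^ m.
Proof.
  intros Ha Hm1. pose proof (Hm_succ m (a - 1) ltac:(lra) Hm1) as E.
  replace (a - 1 + 1) with a in E by ring. lra.
Qed.

Lemma H_pred a : 1 <= a -> H (a - 1) = H a - / a.
Proof. intros Ha. unfold H. rewrite Hm_pred by (lra || lia). now rewrite pow_1. Qed.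

Lemma is_series1_inv_mul_shift a :
  0 < a -> is_series1 (fun n => / (INR n * (INR n + a))) (H a / a).
Proof.
  intros Ha. replace (H a / a) with (/ a * Hm 1 a) by (unfold H, Rdiv; ring).
  eapply is_series1_ext; [|apply is_series1_scal, Hm_is_series1; lra || lia].
  intros n Hn. pose proof (INR_ge_1 n Hn) as Hn1. unfold harm_term. field. lra.
Qed.

Lemma is_series1_inv_sqr_shift a :
  0 <= a -> is_series1 (fun n => / (INR n + a) ^ 2) (zeta 2 - Hm 2 a).
Proof.
  intros Ha. eapply is_series1_ext;
    [|exact (is_series1_minus _ _ _ _ zeta2_is_series1 (Hm_is_series1 2 a Ha ltac:(lia)))].
  intros n Hn. unfold harm_term. ring.
Qed.

Lemma is_series1_inv_mul_sqr_shift a : 0 < a ->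
  is_series1 (fun n => / (INR n * (INR n + a) ^ 2)) ((H a / a - (zeta 2 - Hm 2 a)) / a).
Proof.
  intros Ha. replace ((H a / a - (zeta 2 - Hm 2 a)) / a) with (/ a * (H a / a - (zeta 2 - Hm 2 a)))
    by (unfold Rdiv; ring).
  eapply is_series1_ext; [|apply is_series1_scal, is_series1_minus;
    [apply is_series1_inv_mul_shift|apply is_series1_inv_sqr_shift]; lra].
  intros n Hn. pose proof (INR_ge_1 n Hn) as Hn1. cbv beta. field. lra.
Qed.

(** * Growth of harmonic numbers *)

Definition harm N := sum1 N (fun i => / INR i).

Lemma harm_nonneg N : 0 <= harm N.
Proof.
  apply sum1_nonneg. intros i Hi. pose proof (INR_ge_1 i ltac:(lia)) as Hi1.
  left. apply Rinv_0_lt_compat. lra.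
Qed.

Lemma ln_le_sub_1 y : 0 < y -> ln y <= y - 1.
Proof. intros Hy. pose proof (exp_ineq1_le (ln y)) as Hexp. rewrite exp_ln in * by exact Hy. lra. Qed.

Lemma harm_succ_le_ln N : harm (S N) <= 1 + ln (INR (S N)).
Proof.
  induction N as [|N IH]; [unfold harm; simpl; rewrite ln_1; lra|].
  unfold harm in *. rewrite sum1_S, (S_INR (S N)).
  assert (Hpos := INR_ge_1 (S N) ltac:(lia)).
  assert (Hstep : / (INR (S N) + 1) <= ln (INR (S N) + 1) - ln (INR (S N))).
  { pose proof (ln_le_sub_1 (INR (S N) / (INR (S N) + 1)) ltac:(apply Rdiv_lt_0_compat; lra)) as L.
    rewrite ln_div in L by lra.
    replace (INR (S N) / (INR (S N) + 1) - 1) with (- / (INR (S N) + 1)) in L by (field; lra).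
    lra. }
  lra.
Qed.

Lemma harm_le_ln N : harm N <= 1 + ln (INR N + 1).
Proof.
  pose proof (harm_succ_le_ln N) as Hle. rewrite S_INR in Hle.
  assert (Hinv : 0 < / INR (S N)) by (apply Rinv_0_lt_compat, lt_0_INR; lia).
  unfold harm in *. rewrite sum1_S in Hle. lra.
Qed.

Lemma ln_le_4_sqrt_sqrt y : 0 < y -> ln y <= 4 * sqrt (sqrt y).
Proof.
  intros Hy. set (q := sqrt (sqrt y)).
  assert (Hq : 0 < q) by (apply sqrt_lt_R0, sqrt_lt_R0, Hy).
  assert (Hyq : y = q ^ 4).
  { unfold q. replace (sqrt (sqrt y) ^ 4)
      with ((sqrt (sqrt y) * sqrt (sqrt y)) * (sqrt (sqrt y) * sqrt (sqrt y))) by ring.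
    rewrite sqrt_sqrt by (apply sqrt_pos). rewrite sqrt_sqrt; lra. }
  rewrite Hyq, ln_pow by exact Hq. pose proof (ln_le_sub_1 q Hq) as Hln. simpl INR. lra.
Qed.

Lemma H_plus_INR_le a N : 0 <= a -> H (INR N + a) <= H a + harm N.
Proof.
  intros Ha. rewrite Rplus_comm, H_plus_INR by exact Ha.
  apply Rplus_le_compat_l, sum1_le. intros i Hi. pose proof (INR_ge_1 i ltac:(lia)) as Hi1.
  apply Rinv_le_contravar; lra.
Qed.

Lemma H_plus_INR_sqr_le a N : 0 <= a ->
  H (INR N + a) ^ 2 <= 2 * (H a + 1) ^ 2 + 32 * sqrt (INR N + 1).
Proof.
  intros Ha. set (s := sqrt (INR N + 1)).
  assert (HN : 0 < INR N + 1) by (pose proof (pos_INR N); lra).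
  assert (H0 : 0 <= H (INR N + a)) by (apply H_nonneg; pose proof (pos_INR N); lra).
  assert (Hle : H (INR N + a) <= (H a + 1) + 4 * sqrt s).
  { pose proof (H_plus_INR_le a N Ha) as Hharm. pose proof (harm_le_ln N) as Hln.
    pose proof (ln_le_4_sqrt_sqrt _ HN) as Hsqrt. unfold s. lra. }
  assert (Hs : sqrt s * sqrt s = s) by (apply sqrt_sqrt, sqrt_pos).
  assert (Hs0 : 0 <= sqrt s) by apply sqrt_pos.
  assert (Hsq : H (INR N + a) ^ 2 <= ((H a + 1) + 4 * sqrt s) ^ 2) by (apply pow_incr; lra).
  (* [(u + v)^2 <= 2 u^2 + 2 v^2] *)
  pose proof (pow2_ge_0 ((H a + 1) - 4 * sqrt s)) as Hdiff. nra.
Qed.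

Lemma is_lim_seq_inv_sqrt : is_lim_seq (fun N => / sqrt (INR N + 1)) 0.
Proof.
  assert (Hlin : is_lim_seq (fun N => INR N + 1) p_infty).
  { eapply is_lim_seq_plus; [apply is_lim_seq_INR|apply is_lim_seq_const|reflexivity]. }
  exact (is_lim_seq_inv _ _ (filterlim_comp _ _ _ _ sqrt _ _ _ Hlin filterlim_sqrt_p)
           ltac:(discriminate)).
Qed.

Lemma is_lim_seq_H_sqr_div a b : 0 <= a -> 1 <= b ->
  is_lim_seq (fun N => H (INR N + a) ^ 2 / (INR N + b)) 0.
Proof.
  intros Ha Hb. set (K := 2 * (H a + 1) ^ 2).
  apply (is_lim_seq_le_le (fun _ => 0) _ (fun N => K * / (INR N + b) + 32 * / sqrt (INR N + 1)));
    [|apply is_lim_seq_const|].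
  - intro N. pose proof (pos_INR N) as HN.
    assert (Hb' : 0 < / (INR N + b)) by (apply Rinv_0_lt_compat; lra).
    set (s := sqrt (INR N + 1)).
    assert (Hs0 : 0 < s) by (apply sqrt_lt_R0; lra).
    assert (Hss : s * s = INR N + 1) by (apply sqrt_sqrt; lra).
    assert (Hsb : s <= INR N + b) by nra.
    pose proof (H_plus_INR_sqr_le a N Ha) as Hsq. fold K s in Hsq.
    split; [apply Rmult_le_pos; [apply pow2_ge_0|lra]|].
    assert (Hdiv : s * / (INR N + b) <= / s).
    { apply (Rmult_le_reg_l s); [lra|]. rewrite Rinv_r by lra.
      apply (Rmult_le_reg_r (INR N + b)); [lra|]. field_simplify; lra. }
    unfold Rdiv. apply Rle_trans with ((K + 32 * s) * / (INR N + b)); [apply Rmult_le_compat_r; lra|].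
    nra.
  - replace 0 with (K * 0 + 32 * 0) by ring.
    apply is_lim_seq_plus'; [apply (is_lim_seq_scal_l _ K 0)|apply (is_lim_seq_scal_l _ 32 0)];
      [apply is_lim_seq_inv_INR_plus; lra|apply is_lim_seq_inv_sqrt].
Qed.

Lemma is_lim_seq_H_div a b : 0 <= a -> 1 <= b ->
  is_lim_seq (fun N => H (INR N + a) / (INR N + b)) 0.
Proof.
  intros Ha Hb.
  apply (is_lim_seq_le_le (fun _ => 0) _ (fun N => / (INR N + b) + H (INR N + a) ^ 2 / (INR N + b)));
    [|apply is_lim_seq_const|].
  - intro N. pose proof (pos_INR N) as HN.
    assert (H0 : 0 <= H (INR N + a)) by (apply H_nonneg; lra).
    assert (Hb' : 0 < / (INR N + b)) by (apply Rinv_0_lt_compat; lra).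
    assert (Hsq : H (INR N + a) <= 1 + H (INR N + a) ^ 2) by nra.
    unfold Rdiv. split; [apply Rmult_le_pos; lra|].
    rewrite <- (Rmult_1_l (/ (INR N + b))) at 2. rewrite <- Rmult_plus_distr_r.
    apply Rmult_le_compat_r; lra.
  - replace 0 with (0 + 0) by ring.
    apply is_lim_seq_plus'; [apply is_lim_seq_inv_INR_plus; lra|now apply is_lim_seq_H_sqr_div].
Qed.

Lemma is_lim_seq_Hm2_div a b : 0 <= a -> 1 <= b ->
  is_lim_seq (fun N => Hm 2 (INR N + a) / (INR N + b)) 0.
Proof.
  intros Ha Hb. apply (is_lim_seq_le_inv_INR_plus _ 2 b); [lra|]. intro N. pose proof (pos_INR N) as HN.
  assert (Hm2_ge0 : 0 <= Hm 2 (INR N + a)) by (apply Hm_nonneg; lra || lia).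
  pose proof (Hm2_le_2 (INR N + a) ltac:(lra)) as Hm2_le.
  assert (Hinv : 0 < / (INR N + b)) by (apply Rinv_0_lt_compat; lra).
  rewrite Rabs_pos_eq; unfold Rdiv; [|apply Rmult_le_pos; lra].
  apply Rmult_le_compat_r; lra.
Qed.

(* Abel summation. *)
Lemma sum1_harm_div_mul_succ N :
  sum1 N (fun p => harm p / (INR p * (INR p + 1))) + harm N / (INR N + 1)
  = sum1 N (fun p => / INR p ^ 2).
Proof.
  induction N as [|N IH]; [unfold harm; simpl; field|].
  rewrite !sum1_S, <- IH. change (harm (S N)) with (harm N + / INR (S N)).
  pose proof (pos_INR N) as HN. rewrite S_INR. field. lra.
Qed.

Lemma sum1_harm_div_sqr_le_4 N : sum1 N (fun p => harm p / INR p ^ 2) <= 4.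
Proof.
  apply Rle_trans with (2 * sum1 N (fun p => harm p / (INR p * (INR p + 1)))).
  - rewrite <- sum1_scal. apply sum1_le. intros i Hi. pose proof (INR_ge_1 i ltac:(lia)) as Hi1.
    pose proof (harm_nonneg i) as Hharm. unfold Rdiv.
    replace (2 * (harm i * / (INR i * (INR i + 1)))) with (harm i * / (INR i * (INR i + 1) / 2))
      by (field; lra).
    apply Rmult_le_compat_l; [lra|]. apply Rinv_le_contravar; [|simpl]; nra.
  - pose proof (sum1_harm_div_mul_succ N) as Habel. pose proof (sum1_inv_sqr_le_2 N) as Hsq.
    assert (Hrest : 0 <= harm N / (INR N + 1)).
    { pose proof (harm_nonneg N) as Hharm. pose proof (pos_INR N) as HN.
      unfold Rdiv. apply Rmult_le_pos; [lra|left; apply Rinv_0_lt_compat; lra]. }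
    lra.
Qed.

(** * The series [sum_n H_(n+a)/(n(n+a))] *)

Definition inv_gap x (p : nat) := / INR p - / (INR p + x).

Definition gap_term (f : R -> R) a x n := f (INR n + a) * inv_gap x n.

Lemma inv_gap_bounds x p : 0 <= x -> (1 <= p)%nat -> 0 <= inv_gap x p <= x * / INR p ^ 2.
Proof.
  intros Hx Hp. pose proof (INR_ge_1 p Hp) as Hp1. unfold inv_gap.
  replace (/ INR p - / (INR p + x)) with (x * / (INR p * (INR p + x))) by (field; lra).
  split; [apply Rmult_le_pos; [lra|left; apply Rinv_0_lt_compat; nra]|].
  apply Rmult_le_compat_l; [lra|]. apply Rinv_le_contravar; simpl; nra.
Qed.

Lemma harm_term_1 x p : harm_term 1 x p = inv_gap x p.
Proof. unfold harm_term, inv_gap. now rewrite !pow_1. Qed.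

Definition Psi x := lim_seq (fun N => sum1 N (gap_term H x x)).

Lemma Psi_is_series1 x : 0 <= x -> is_series1 (gap_term H x x) (Psi x).
Proof.
  intros Hx.
  (* [H (p + x) <= H x + harm p] and [inv_gap x p <= x / p^2] *)
  destruct (ex_series1_bounded (gap_term H x x) (H x * H x + x * 4)) as [l Hl].
  - intros p Hp. apply Rmult_le_pos; [apply H_nonneg; pose proof (pos_INR p) as Hp0; lra|].
    now apply inv_gap_bounds.
  - intro N. apply Rle_trans with (sum1 N (fun p => H x * inv_gap x p + x * (harm p / INR p ^ 2))).
    + apply sum1_le. intros i Hi. unfold gap_term.
      pose proof (H_plus_INR_le x i Hx) as HHi. pose proof (inv_gap_bounds x i Hx ltac:(lia)) as Hg.
      pose proof (harm_nonneg i) as Hharm.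
      apply Rle_trans with ((H x + harm i) * inv_gap x i); [apply Rmult_le_compat_r; lra|].
      unfold Rdiv. nra.
    + rewrite sum1_plus, !sum1_scal. apply Rplus_le_compat.
      * apply Rmult_le_compat_l; [now apply H_nonneg|].
        rewrite <- (sum1_ext N (harm_term 1 x)) by (intros; apply harm_term_1).
        apply sum1_le_is_series1; [intros; apply harm_term_bounds; auto|].
        apply Hm_is_series1; [lra|lia].
      * apply Rmult_le_compat_l; [lra|apply sum1_harm_div_sqr_le_4].
  - unfold Psi. now rewrite (lim_seq_is_lim _ l).
Qed.

Lemma Psi_succ x : 0 <= x -> Psi (x + 1) = Psi x + 2 * H (x + 1) / (x + 1).
Proof.
  intros Hx.
  set (g := fun m : nat => H (INR m + (x + 1)) / (INR m + (x + 1))).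
  assert (Htel := is_series1_telescope g 0 ltac:(apply is_lim_seq_H_div; lra)).
  pose proof (is_series1_plus _ _ _ _ (is_series1_plus _ _ _ _ (Psi_is_series1 x Hx)
                (is_series1_inv_mul_shift (x + 1) ltac:(lra))) Htel) as Hsum.
  apply (is_series1_unique (gap_term H (x + 1) (x + 1))); [apply Psi_is_series1; lra|].
  replace (Psi x + 2 * H (x + 1) / (x + 1)) with (Psi x + H (x + 1) / (x + 1) + (g 0%nat - 0))
    by (unfold g; simpl INR; rewrite Rplus_0_l; field; lra).
  eapply is_series1_ext; [|exact Hsum]. intros [|n] Hn; [lia|].
  unfold gap_term, inv_gap, g. simpl pred. rewrite S_INR.
  pose proof (pos_INR n) as HN.
  replace (INR n + 1 + (x + 1)) with (INR n + 1 + x + 1) by ring.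
  rewrite (H_succ (INR n + 1 + x)) by lra.
  replace (INR n + (x + 1)) with (INR n + 1 + x) by ring.
  field. lra.
Qed.

Definition Psi_defect x := Psi x - H x ^ 2 - Hm 2 x.

Lemma Psi_defect_succ x : 0 <= x -> Psi_defect (x + 1) = Psi_defect x.
Proof.
  intros Hx. unfold Psi_defect. rewrite Psi_succ, H_succ, Hm_succ by (lra || lia). field. lra.
Qed.

Lemma Psi_defect_plus_INR c n : 0 <= c -> Psi_defect (c + INR n) = Psi_defect c.
Proof.
  intros Hc. induction n as [|n IH]; [simpl; now rewrite Rplus_0_r|].
  rewrite S_INR, <- Rplus_assoc, Psi_defect_succ; [exact IH|pose proof (pos_INR n) as Hn; lra].
Qed.

Lemma Psi_defect_0 : Psi_defect 0 = 0.
Proof.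
  unfold Psi_defect. rewrite H_0, Hm_0.
  replace (Psi 0) with 0; [ring|].
  apply (is_series1_unique (gap_term H 0 0)); [|apply Psi_is_series1; lra].
  eapply is_series1_ext; [|apply is_series1_0].
  intros n Hn. unfold gap_term, inv_gap. rewrite Rplus_0_r. ring.
Qed.

Definition defect_term x p := gap_term H x x p - H x * harm_term 1 x p - harm_term 2 x p.

Lemma defect_term_is_series1 x : 0 <= x -> is_series1 (defect_term x) (Psi_defect x).
Proof.
  intros Hx. unfold Psi_defect. replace (H x ^ 2) with (H x * Hm 1 x) by (unfold H; ring).
  apply is_series1_minus; [apply is_series1_minus|apply Hm_is_series1; [lra|lia]].
  - now apply Psi_is_series1.
  - apply is_series1_scal, Hm_is_series1; [lra|lia].
Qed.

Definition shifted_harm x q := sum1 q (fun m => / (INR m + x)).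

Lemma defect_term_eq x p : 0 <= x -> (1 <= p)%nat ->
  defect_term x p = inv_gap x p * (shifted_harm x (pred p) - / INR p).
Proof.
  intros Hx Hp. destruct p as [|q]; [lia|]. simpl pred.
  unfold defect_term, gap_term. rewrite harm_term_1, Rplus_comm, H_plus_INR, sum1_S by exact Hx.
  rewrite (sum1_ext q _ (fun m => / (INR m + x))) by (intros; now rewrite Rplus_comm).
  unfold harm_term, inv_gap, shifted_harm. pose proof (INR_ge_1 (S q) ltac:(lia)) as Hq.
  rewrite (Rplus_comm x). field. lra.
Qed.

Lemma shifted_harm_bounds x q : 0 <= x -> 0 <= shifted_harm x q <= harm q.
Proof.
  intros Hx. split; [apply sum1_nonneg|apply sum1_le]; intros i Hi;
    pose proof (INR_ge_1 i ltac:(lia)) as Hi1; [left; apply Rinv_0_lt_compat|apply Rinv_le_contravar]; lra.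
Qed.

Lemma sum1_inv_sqr_shift_le v q : 0 < v -> sum1 q (fun m => / (INR m + v) ^ 2) <= / v - / (INR q + v).
Proof.
  intros Hv. induction q as [|q IH]; [simpl; rewrite Rplus_0_l; lra|].
  rewrite sum1_S, S_INR. pose proof (pos_INR q) as Hq.
  assert (Hstep : / (INR q + 1 + v) ^ 2 <= / (INR q + v) - / (INR q + 1 + v)).
  { replace (/ (INR q + v) - / (INR q + 1 + v)) with (/ ((INR q + v) * (INR q + 1 + v))) by (field; lra).
    apply Rinv_le_contravar; [apply Rmult_lt_0_compat|simpl]; nra. }
  lra.
Qed.

Lemma shifted_harm_diff_bounds c v q : 0 <= c -> 0 < v ->
  0 <= shifted_harm v q - shifted_harm (c + v) q <= c / v.
Proof.
  intros Hc Hv. unfold shifted_harm. rewrite <- sum1_minus. split.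
  - apply sum1_nonneg. intros i Hi. pose proof (pos_INR i) as HI.
    assert (/ (INR i + (c + v)) <= / (INR i + v)) as Hle by (apply Rinv_le_contravar; lra). lra.
  - apply Rle_trans with (c * sum1 q (fun m => / (INR m + v) ^ 2)).
    + rewrite <- sum1_scal. apply sum1_le. intros i Hi. pose proof (pos_INR i) as HI.
      replace (/ (INR i + v) - / (INR i + (c + v))) with (c * / ((INR i + v) * (INR i + (c + v))))
        by (field; lra).
      apply Rmult_le_compat_l; [lra|]. apply Rinv_le_contravar; [apply Rmult_lt_0_compat|simpl]; nra.
    + pose proof (sum1_inv_sqr_shift_le v q Hv). pose proof (pos_INR q) as Hq.
      assert (0 < / (INR q + v)) as Hinv by (apply Rinv_0_lt_compat; lra).
      unfold Rdiv. apply Rmult_le_compat_l; lra.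
Qed.

Lemma defect_term_diff_le c v p : 0 <= c -> 0 < v -> (1 <= p)%nat ->
  Rabs (defect_term (c + v) p - defect_term v p) <= c * (harm p + 1) / (INR p * (INR p + v)).
Proof.
  intros Hc Hv Hp. rewrite !defect_term_eq by (lra || lia).
  pose proof (INR_ge_1 p Hp) as Hp1.
  set (A1 := shifted_harm (c + v) (pred p)). set (A0 := shifted_harm v (pred p)).
  assert (HA1 := shifted_harm_bounds (c + v) (pred p) ltac:(lra)).
  assert (HD := shifted_harm_diff_bounds c v (pred p) Hc Hv). fold A1 A0 in HA1, HD.
  assert (Hharm : harm (pred p) + / INR p = harm p).
  { destruct p as [|q]; [lia|]. reflexivity. }
  assert (Hinv : 0 < / INR p) by (apply Rinv_0_lt_compat; lra).
  assert (Hharm0 := harm_nonneg (pred p)).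
  set (w := inv_gap v p). set (e := inv_gap (c + v) p - w).
  assert (Hw : w = v / (INR p * (INR p + v))) by (unfold w, inv_gap; field; lra).
  assert (He : e = c / ((INR p + v) * (INR p + c + v))) by (unfold e, w, inv_gap; field; lra).
  assert (He_le : 0 <= e <= c / (INR p * (INR p + v))).
  { rewrite He. unfold Rdiv. split; [apply Rmult_le_pos; [lra|left; apply Rinv_0_lt_compat; nra]|].
    apply Rmult_le_compat_l; [lra|]. apply Rinv_le_contravar; nra. }
  replace (inv_gap (c + v) p) with (w + e) by (unfold e; ring).
  replace ((w + e) * (A1 - / INR p) - w * (A0 - / INR p)) with (e * (A1 - / INR p) - w * (A0 - A1))
    by ring.
  (* the first term is at most [e * harm p], the second at most [w * c / v] *)
  assert (Hw0 : 0 <= w) by (rewrite Hw; unfold Rdiv; apply Rmult_le_pos; [lra|left; apply Rinv_0_lt_compat; nra]).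
  assert (HA : Rabs (A1 - / INR p) <= harm p) by (apply Rabs_le; lra).
  eapply Rle_trans; [apply Rabs_triang|]. rewrite Rabs_Ropp, !Rabs_mult.
  rewrite (Rabs_pos_eq e), (Rabs_pos_eq w), (Rabs_pos_eq (A0 - A1)) by lra.
  apply Rle_trans with (c / (INR p * (INR p + v)) * harm p + w * (c / v)).
  - apply Rplus_le_compat; [apply Rmult_le_compat; [lra|apply Rabs_pos|lra|lra]|].
    apply Rmult_le_compat_l; lra.
  - rewrite Hw. right. field. lra.
Qed.

Lemma Psi_defect_eq_0 c : 0 <= c -> Psi_defect c = 0.
Proof.
  intros Hc.
  (* [Psi_defect c = Psi_defect (c + n) - Psi_defect n] for every [n], and the latter
     difference tends to 0 by dominated convergence *)
  set (g := fun n p => defect_term (c + INR (S n)) p - defect_term (INR (S n)) p).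
  set (d := fun p => c * (harm p + 1) / INR p ^ 2).
  assert (Hg : forall n p, (1 <= p)%nat ->
            Rabs (g n p) <= c * (harm p + 1) / (INR p * (INR p + INR (S n)))).
  { intros n p Hp. apply defect_term_diff_le; [lra|apply lt_0_INR; lia|exact Hp]. }
  assert (Hnum : forall p, 0 <= c * (harm p + 1)).
  { intro p. pose proof (harm_nonneg p) as Hharm. apply Rmult_le_pos; lra. }
  assert (Hdom : forall n p, (1 <= p)%nat -> Rabs (g n p) <= d p).
  { intros n p Hp. eapply Rle_trans; [now apply Hg|]. unfold d, Rdiv.
    pose proof (INR_ge_1 p Hp) as Hp1. pose proof (pos_INR (S n)) as HSn.
    apply Rmult_le_compat_l; [apply Hnum|]. apply Rinv_le_contravar; [apply pow_lt; lra|].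
    replace (INR p ^ 2) with (INR p * INR p) by ring. apply Rmult_le_compat_l; lra. }
  assert (Hsum : forall N, sum1 N d <= c * 4 + c * 2).
  { intro N. rewrite (sum1_ext N d (fun p => c * (harm p / INR p ^ 2) + c * / INR p ^ 2))
      by (intros; unfold d, Rdiv; ring).
    rewrite sum1_plus, !sum1_scal.
    apply Rplus_le_compat; apply Rmult_le_compat_l;
      [lra|apply sum1_harm_div_sqr_le_4|lra|apply sum1_inv_sqr_le_2]. }
  assert (Hlim : forall p, (1 <= p)%nat -> is_lim_seq (fun n => g n p) 0).
  { intros p Hp. apply (is_lim_seq_le_inv_INR_plus _ (c * (harm p + 1) / INR p) 1); [lra|].
    intro n. eapply Rle_trans; [now apply Hg|].
    pose proof (INR_ge_1 p Hp) as Hp1. pose proof (pos_INR n) as Hn0. rewrite S_INR.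
    replace (c * (harm p + 1) / INR p * / (INR n + 1))
      with (c * (harm p + 1) / (INR p * (INR n + 1))) by (field; lra).
    unfold Rdiv. apply Rmult_le_compat_l; [apply Hnum|].
    apply Rinv_le_contravar; [apply Rmult_lt_0_compat|apply Rmult_le_compat_l]; lra. }
  assert (Hseries : forall n, is_series1 (g n) (Psi_defect c)).
  { intro n. pose proof (pos_INR (S n)) as HSn.
    replace (Psi_defect c) with (Psi_defect (c + INR (S n)) - Psi_defect (0 + INR (S n)))
      by (rewrite !Psi_defect_plus_INR, Psi_defect_0; lra).
    rewrite Rplus_0_l. apply is_series1_minus; apply defect_term_is_series1; lra. }
  pose proof (is_lim_seq_series1_dominated g d _ _ Hdom Hsum Hlim Hseries) as Hzero.
  apply is_lim_seq_unique in Hzero. rewrite Lim_seq_const in Hzero. now injection Hzero.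
Qed.

Lemma is_series1_H_div_mul_shift a : 0 < a ->
  is_series1 (fun n => H (INR n + a) / (INR n * (INR n + a))) ((H a ^ 2 + Hm 2 a) / a).
Proof.
  intros Ha.
  assert (HPsi : Psi a = H a ^ 2 + Hm 2 a).
  { pose proof (Psi_defect_eq_0 a ltac:(lra)) as Hdef. unfold Psi_defect in Hdef. lra. }
  replace ((H a ^ 2 + Hm 2 a) / a) with (/ a * Psi a) by (rewrite HPsi; unfold Rdiv; ring).
  eapply is_series1_ext; [|apply is_series1_scal, Psi_is_series1; lra].
  intros n Hn. pose proof (INR_ge_1 n Hn) as Hn1. unfold gap_term, inv_gap. field. lra.
Qed.

(** * Induction on the shift [j] *)

(* Termwise up to the telescoping [g (n-1) - g n] with [g m = f(m+a)/(m+j+1)]. *)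
Lemma is_series1_gap_term_succ f a j L0 L1 :
  is_series1 (gap_term f (a - 1) (INR j)) L0 ->
  is_series1 (fun n => (f (INR n + a) - f (INR n + a - 1)) / INR n) L1 ->
  is_lim_seq (fun N => f (INR N + a) / (INR N + (INR j + 1))) 0 ->
  is_series1 (gap_term f a (INR (S j))) (L0 + L1 + f a / (INR j + 1)).
Proof.
  intros H0 H1 Hlim.
  set (g := fun m : nat => f (INR m + a) / (INR m + (INR j + 1))).
  replace (f a / (INR j + 1)) with (g 0%nat - 0) by (unfold g; simpl INR; rewrite !Rplus_0_l; ring).
  eapply is_series1_ext;
    [|exact (is_series1_plus _ _ _ _ (is_series1_plus _ _ _ _ H0 H1) (is_series1_telescope g 0 Hlim))].
  intros [|m] Hm; [lia|]. unfold gap_term, inv_gap, g. simpl pred.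
  pose proof (pos_INR m) as Hm0. pose proof (pos_INR j) as Hj. rewrite !S_INR.
  replace (INR m + 1 + (a - 1)) with (INR m + a) by ring.
  replace (INR m + 1 + a - 1) with (INR m + a) by ring.
  field. lra.
Qed.

Lemma is_series1_gap_term f (B : R -> nat -> R) (D : R -> R) :
  (forall a, B a 0%nat = 0) ->
  (forall a j, INR (S j) < a -> B a (S j) = B (a - 1) j + D a + f a / (INR j + 1)) ->
  (forall a, 0 < a -> is_series1 (fun n => (f (INR n + a) - f (INR n + a - 1)) / INR n) (D a)) ->
  (forall a b, 0 <= a -> 1 <= b -> is_lim_seq (fun N => f (INR N + a) / (INR N + b)) 0) ->
  forall j a, INR j < a -> is_series1 (gap_term f a (INR j)) (B a j).
Proof.
  intros HB0 HBS HD Hlim j. induction j as [|j IH]; intros a Ha.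
  - rewrite HB0. eapply is_series1_ext; [|apply is_series1_0].
    intros n Hn. unfold gap_term, inv_gap. simpl INR. rewrite Rplus_0_r. ring.
  - rewrite HBS by exact Ha. rewrite S_INR in Ha. pose proof (pos_INR j) as Hj.
    apply is_series1_gap_term_succ; [apply IH; lra|apply HD; lra|apply Hlim; lra].
Qed.

Lemma sum1_succ_shift (F : R -> nat -> R) a j :
  sum1 (S j) (fun i => F (a + INR i - INR (S j)) i)
  = sum1 j (fun i => F (a - 1 + INR i - INR j) i) + F a (S j).
Proof.
  rewrite sum1_S. f_equal.
  - apply sum1_ext. intros i Hi. rewrite S_INR. f_equal. ring.
  - f_equal. ring.
Qed.

Definition rhs_H alpha j :=
  H alpha ^ 2 + Hm 2 alpha - H (alpha - INR j) ^ 2 - Hm 2 (alpha - INR j)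
  - (INR j - alpha) *
      sum1 j (fun i => H (alpha + INR i - INR j) / (INR i * (alpha + INR i - INR j))).

Definition rhs_Hm2 alpha j :=
  2 * Hm 3 alpha + H (alpha - INR j) * zeta 2 + 2 * H alpha * Hm 2 alpha
  - 2 * Hm 3 (alpha - INR j) - H alpha * zeta 2
  - 2 * H (alpha - INR j) * Hm 2 (alpha - INR j)
  - (INR j - alpha) *
      sum1 j (fun i => Hm 2 (alpha + INR i - INR j) / (INR i * (alpha + INR i - INR j)))
  - sum1 j (fun i => H (alpha + INR i - INR j) / (alpha + INR i - INR j) ^ 2).

Definition rhs_H_sqr alpha j :=
  H alpha ^ 3 + H alpha * Hm 2 alpha + H alpha * zeta 2
  - H (alpha - INR j) ^ 3 - H (alpha - INR j) * Hm 2 (alpha - INR j)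
  - H (alpha - INR j) * zeta 2
  + sum1 j (fun i => H (alpha + INR i - INR j) / (alpha + INR i - INR j) ^ 2)
  - (INR j - alpha) *
      sum1 j (fun i => H (alpha + INR i - INR j) ^ 2 / (INR i * (alpha + INR i - INR j))).

Lemma rhs_H_succ a j : INR (S j) < a ->
  rhs_H a (S j) = rhs_H (a - 1) j + H a / a + H a / (INR j + 1).
Proof.
  intros Ha. rewrite S_INR in Ha. pose proof (pos_INR j) as Hj. unfold rhs_H.
  rewrite (sum1_succ_shift (fun x i => H x / (INR i * x))).
  replace (a - INR (S j)) with (a - 1 - INR j) by (rewrite S_INR; ring).
  rewrite H_pred, Hm_pred by (lra || lia).
  rewrite S_INR. field. lra.
Qed.

Lemma rhs_Hm2_succ a j : INR (S j) < a ->
  rhs_Hm2 a (S j)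
  = rhs_Hm2 (a - 1) j + (H a / a - (zeta 2 - Hm 2 a)) / a + Hm 2 a / (INR j + 1).
Proof.
  intros Ha. rewrite S_INR in Ha. pose proof (pos_INR j) as Hj. unfold rhs_Hm2.
  rewrite (sum1_succ_shift (fun x i => Hm 2 x / (INR i * x))),
          (sum1_succ_shift (fun x i => H x / x ^ 2)).
  replace (a - INR (S j)) with (a - 1 - INR j) by (rewrite S_INR; ring).
  rewrite H_pred, !Hm_pred by (lra || lia).
  rewrite S_INR. field. lra.
Qed.

Lemma rhs_H_sqr_succ a j : INR (S j) < a ->
  rhs_H_sqr a (S j)
  = rhs_H_sqr (a - 1) j + (2 * ((H a ^ 2 + Hm 2 a) / a) - (H a / a - (zeta 2 - Hm 2 a)) / a)
    + H a ^ 2 / (INR j + 1).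
Proof.
  intros Ha. rewrite S_INR in Ha. pose proof (pos_INR j) as Hj. unfold rhs_H_sqr.
  rewrite (sum1_succ_shift (fun x i => H x / x ^ 2)),
          (sum1_succ_shift (fun x i => H x ^ 2 / (INR i * x))).
  replace (a - INR (S j)) with (a - 1 - INR j) by (rewrite S_INR; ring).
  rewrite H_pred, Hm_pred by (lra || lia).
  rewrite S_INR. field. lra.
Qed.

Lemma is_series1_gap_H j a : INR j < a -> is_series1 (gap_term H a (INR j)) (rhs_H a j).
Proof.
  apply (is_series1_gap_term H rhs_H (fun a => H a / a)).
  - intro x. unfold rhs_H. change (INR 0) with 0. rewrite !Rminus_0_r. simpl sum1. ring.
  - exact rhs_H_succ.
  - intros x Hx. eapply is_series1_ext; [|now apply is_series1_inv_mul_shift].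
    intros n Hn. pose proof (INR_ge_1 n Hn) as Hn1.
    rewrite H_pred by lra. field. lra.
  - exact is_lim_seq_H_div.
Qed.

Lemma is_series1_gap_Hm2 j a : INR j < a ->
  is_series1 (gap_term (Hm 2) a (INR j)) (rhs_Hm2 a j).
Proof.
  apply (is_series1_gap_term (Hm 2) rhs_Hm2 (fun a => (H a / a - (zeta 2 - Hm 2 a)) / a)).
  - intro x. unfold rhs_Hm2. change (INR 0) with 0. rewrite !Rminus_0_r. simpl sum1. ring.
  - exact rhs_Hm2_succ.
  - intros x Hx. eapply is_series1_ext; [|now apply is_series1_inv_mul_sqr_shift].
    intros n Hn. pose proof (INR_ge_1 n Hn) as Hn1.
    rewrite Hm_pred by (lra || lia). field. lra.
  - exact is_lim_seq_Hm2_div.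
Qed.

Lemma is_series1_gap_H_sqr j a : INR j < a ->
  is_series1 (gap_term (fun x => H x ^ 2) a (INR j)) (rhs_H_sqr a j).
Proof.
  apply (is_series1_gap_term (fun x => H x ^ 2) rhs_H_sqr
           (fun a => 2 * ((H a ^ 2 + Hm 2 a) / a) - (H a / a - (zeta 2 - Hm 2 a)) / a)).
  - intro x. unfold rhs_H_sqr. change (INR 0) with 0. rewrite !Rminus_0_r. simpl sum1. ring.
  - exact rhs_H_sqr_succ.
  - (* [H(x)^2 - H(x-1)^2 = 2 H(x)/x - 1/x^2] *)
    intros x Hx. eapply is_series1_ext; [|apply is_series1_minus;
      [apply is_series1_scal, is_series1_H_div_mul_shift|apply is_series1_inv_mul_sqr_shift]; lra].
    intros n Hn. pose proof (INR_ge_1 n Hn) as Hn1.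
    rewrite H_pred by lra. field. lra.
  - exact is_lim_seq_H_sqr_div.
Qed.

(** * Partial fractions *)

Lemma C_n_0 n : C n 0 = 1.
Proof. unfold C. rewrite Nat.sub_0_r. simpl. field. apply INR_fact_neq_0. Qed.

Lemma C_n_n n : C n n = 1.
Proof. unfold C. rewrite Nat.sub_diag. simpl. field. apply INR_fact_neq_0. Qed.

Lemma sum1_alt_binomial_succ k g :
  sum1 (S k) (fun j => (-1) ^ (j + 1) * C (S k) j * g j)
  = sum1 k (fun j => (-1) ^ (j + 1) * C k j * g j) + g 1%nat
    - sum1 k (fun j => (-1) ^ (j + 1) * C k j * g (S j)).
Proof.
  rewrite sum1_S, (sum1_ext k _ (fun j => (-1) ^ (j + 1) * C k j * g j
                                        + (-1) ^ (j + 1) * C k (pred j) * g j)).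
  2: { intros [|i] Hi; [lia|]. simpl pred. rewrite <- (pascal k i) by lia. ring. }
  rewrite sum1_plus, Rplus_assoc.
  replace (sum1 k (fun j => (-1) ^ (j + 1) * C k (pred j) * g j)
           + (-1) ^ (S k + 1) * C (S k) (S k) * g (S k))
    with (sum1 (S k) (fun j => (-1) ^ (j + 1) * C k (pred j) * g j))
    by (rewrite sum1_S; simpl pred; now rewrite !C_n_n).
  rewrite sum1_Sl. simpl pred. rewrite C_n_0.
  replace (sum1 k (fun i => (-1) ^ (S i + 1) * C k i * g (S i)))
    with (-1 * sum1 k (fun i => (-1) ^ (i + 1) * C k i * g (S i)))
    by (rewrite <- sum1_scal; apply sum1_ext; intros; simpl; ring).
  simpl. ring.
Qed.

Definition alt_partial_fraction k x :=
  sum1 k (fun j => (-1) ^ (j + 1) * C k j * (/ x - / (x + INR j))).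

Lemma alt_partial_fraction_succ k x : (1 <= k)%nat ->
  alt_partial_fraction (S k) x = alt_partial_fraction k x - alt_partial_fraction k (x + 1).
Proof.
  intros Hk. unfold alt_partial_fraction. rewrite sum1_alt_binomial_succ.
  rewrite (sum1_ext k (fun j => (-1) ^ (j + 1) * C k j * (/ x - / (x + INR (S j))))
                      (fun j => (/ x - / (x + 1)) * ((-1) ^ (j + 1) * C k j * 1)
                                + (-1) ^ (j + 1) * C k j * (/ (x + 1) - / (x + 1 + INR j)))).
  2: { intros i Hi. rewrite S_INR. replace (x + (INR i + 1)) with (x + 1 + INR i) by ring. ring. }
  rewrite sum1_plus, sum1_scal. destruct k as [|k]; [lia|].
  replace (sum1 (S k) (fun j => (-1) ^ (j + 1) * C (S k) j * 1)) with 1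
    by (rewrite sum1_alt_binomial_succ; ring).
  change (INR 1) with 1. ring.
Qed.

Lemma INR_fact_S n : INR (fact (S n)) = INR (S n) * INR (fact n).
Proof. rewrite <- mult_INR. reflexivity. Qed.

Lemma inv_mul_binomial_succ k m : (1 <= m)%nat ->
  / (INR m * C (m + S k) (S k)) = / (INR m * C (m + k) k) - / (INR (S m) * C (S m + k) k).
Proof.
  intros Hm. unfold C.
  replace (m + S k - S k)%nat with m by lia. replace (m + k - k)%nat with m by lia.
  replace (S m + k - k)%nat with (S m) by lia.
  replace (m + S k)%nat with (S (m + k)) by lia. replace (S m + k)%nat with (S (m + k)) by lia.
  rewrite !INR_fact_S, !S_INR, plus_INR.
  pose proof (INR_ge_1 m Hm) as Hm1. pose proof (pos_INR k) as Hk.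
  pose proof (INR_fact_neq_0 k) as Hkf. pose proof (INR_fact_neq_0 m) as Hmf.
  pose proof (INR_fact_neq_0 (m + k)) as Hmkf.
  field. repeat split; lra || auto.
Qed.

Lemma inv_mul_binomial_partial_fraction k m : (1 <= k)%nat -> (1 <= m)%nat ->
  / (INR m * C (m + k) k) = alt_partial_fraction k (INR m).
Proof.
  intros Hk. revert m. induction Hk as [|k Hk IH]; intros m Hm.
  - unfold alt_partial_fraction. simpl sum1. rewrite C_n_n.
    replace (m + 1)%nat with (S m) by lia. unfold C. replace (S m - 1)%nat with m by lia.
    rewrite INR_fact_S. simpl fact. rewrite S_INR. pose proof (INR_ge_1 m Hm) as Hm1.
    pose proof (INR_fact_neq_0 m) as Hmf. simpl INR. field. repeat split; lra || auto.
  - rewrite alt_partial_fraction_succ, inv_mul_binomial_succ, !IH by (lia || auto).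
    now rewrite S_INR.
Qed.

Lemma infinite_sum_inv_mul_binomial f a k (L : nat -> R) : (1 <= k)%nat ->
  (forall j, (1 <= j <= k)%nat -> is_series1 (gap_term f a (INR j)) (L j)) ->
  infinite_sum (fun n => f (INR (S n) + a) / (INR (S n) * C (S n + k) k))
    (sum1 k (fun j => (-1) ^ (j + 1) * C k j * L j)).
Proof.
  intros Hk HL.
  set (t := fun m : nat => f (INR m + a) / (INR m * C (m + k) k)).
  assert (Ht : is_series1 t (sum1 k (fun j => (-1) ^ (j + 1) * C k j * L j))).
  { eapply is_lim_seq_ext; [|apply (is_lim_seq_sum1 k
      (fun j N => sum1 N (fun m => (-1) ^ (j + 1) * C k j * gap_term f a (INR j) m)))].
    - intro N. simpl. rewrite <- sum1_comm. apply sum1_ext. intros m Hm.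
      unfold t, Rdiv. rewrite inv_mul_binomial_partial_fraction by (auto || lia).
      unfold alt_partial_fraction, gap_term, inv_gap.
      rewrite <- sum1_scal. apply sum1_ext. intros; ring.
    - intros j Hj. eapply is_lim_seq_ext;
        [|exact (is_lim_seq_scal_l _ ((-1) ^ (j + 1) * C k j) _ (HL j Hj))].
      intro N. simpl. now rewrite sum1_scal. }
  apply is_lim_seq_Reals. apply is_lim_seq_incr_1 in Ht.
  eapply is_lim_seq_ext; [|exact Ht]. intro N. symmetry. apply (sum_f_R0_sum1 t).
Qed.

Theorem mainTheorem18 (k : nat) (alpha : R) (hk : (1 <= k)%nat) (ha : INR k < alpha) :
  infinite_sum
    (fun n => H (INR (S n) + alpha) / (INR (S n) * C (S n + k) k))
    (sum1 k (fun j => (-1) ^ (j + 1) * C k j *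
       ( H alpha ^ 2 + Hm 2 alpha - H (alpha - INR j) ^ 2 - Hm 2 (alpha - INR j)
         - (INR j - alpha) *
             sum1 j (fun i => H (alpha + INR i - INR j) / (INR i * (alpha + INR i - INR j))))))
  /\
  infinite_sum
    (fun n => Hm 2 (INR (S n) + alpha) / (INR (S n) * C (S n + k) k))
    (sum1 k (fun j => (-1) ^ (j + 1) * C k j *
       ( 2 * Hm 3 alpha + H (alpha - INR j) * zeta 2 + 2 * H alpha * Hm 2 alpha
         - 2 * Hm 3 (alpha - INR j) - H alpha * zeta 2
         - 2 * H (alpha - INR j) * Hm 2 (alpha - INR j)
         - (INR j - alpha) *
             sum1 j (fun i => Hm 2 (alpha + INR i - INR j) / (INR i * (alpha + INR i - INR j)))
         - sum1 j (fun i => H (alpha + INR i - INR j) / (alpha + INR i - INR j) ^ 2))))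
  /\
  infinite_sum
    (fun n => H (INR (S n) + alpha) ^ 2 / (INR (S n) * C (S n + k) k))
    (sum1 k (fun j => (-1) ^ (j + 1) * C k j *
       ( H alpha ^ 3 + H alpha * Hm 2 alpha + H alpha * zeta 2
         - H (alpha - INR j) ^ 3 - H (alpha - INR j) * Hm 2 (alpha - INR j)
         - H (alpha - INR j) * zeta 2
         + sum1 j (fun i => H (alpha + INR i - INR j) / (alpha + INR i - INR j) ^ 2)
         - (INR j - alpha) *
             sum1 j (fun i => H (alpha + INR i - INR j) ^ 2 / (INR i * (alpha + INR i - INR j)))))).
Proof.
  assert (Hj : forall j, (1 <= j <= k)%nat -> INR j < alpha).
  { intros j Hjk. apply Rle_lt_trans with (INR k); [apply le_INR; lia|exact ha]. }
  split; [|split].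
  - exact (infinite_sum_inv_mul_binomial H alpha k (rhs_H alpha) hk
             (fun j Hjk => is_series1_gap_H j alpha (Hj j Hjk))).
  - exact (infinite_sum_inv_mul_binomial (Hm 2) alpha k (rhs_Hm2 alpha) hk
             (fun j Hjk => is_series1_gap_Hm2 j alpha (Hj j Hjk))).
  - exact (infinite_sum_inv_mul_binomial (fun x => H x ^ 2) alpha k (rhs_H_sqr alpha) hk
             (fun j Hjk => is_series1_gap_H_sqr j alpha (Hj j Hjk))).
Qed.
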